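(* There exists a constant $L>0$ depending only on $\eta$ such that the following holds. Let $\gamma=(\gamma_1,\dots,\gamma_N)$ with $\gamma_i\in[0,p_i]$ for all $i$, and suppose $$\sum_{i:\,p_i>0}\frac{\gamma_i^4}{p_i^2}\le\frac{L}{n^2}.$$ Then for every $\rho\le\|\gamma\|_t$ we have $R^*_\rho\ge\eta$.
   Context: Binomial model: $N\ge2$, $n\ge2$ even. For $q\in[0,1]^N$ one observes $X_1,\dots,X_n$ i.i.d. in $\{0,1\}^N$ with mutually independent coordinates $X_l(j)\sim\mathrm{Ber}(q_j)$; $\mathbb P_q$ is their joint law. $\|x\|_t=(\sum_j|x_j|^t)^{1/t}$, $t\in[1,2]$. Known $p\in[0,1]^N$ with $\max_jp_j\le1/2$; $\eta\in(0,1)$. For a test $\psi:(\{0,1\}^N)^n\to\{0,1\}$, $R_\rho(\psi)=\mathbb P_p(\psi=1)+\sup_{q\in[0,1]^N:\|p-q\|_t\ge\rho}\mathbb P_q(\psi=0)$, and $R^*_\rho=\inf_\psi R_\rho(\psi)$. *)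

From HB Require Import structures.
From mathcomp Require Import all_boot all_order all_algebra.
From mathcomp Require Import all_classical all_reals all_analysis.
Set Implicit Arguments. Unset Strict Implicit. Unset Printing Implicit Defensive.
Import Order.TTheory GRing.Theory Num.Theory.
Local Open Scope ring_scope.
Local Open Scope classical_set_scope.

Section Binomial.
Variable R : realType.

(* A sample: n observations X_1..X_n, each in {0,1}^N (true = 1). *)
Definition sample (N n : nat) := {ffun 'I_n -> {ffun 'I_N -> bool}}.

Definition pmass (N n : nat) (q : 'I_N -> R) (x : sample N n) : R :=
  \prod_(l < n) \prod_(j < N) (if x l j then q j else 1 - q j).

Definition Prob (N n : nat) (q : 'I_N -> R) (A : pred (sample N n)) : R :=
  \sum_(x : sample N n | A x) pmass q x.

Definition lnorm (N : nat) (t : R) (x : 'I_N -> R) : R :=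
  (\sum_(j < N) `|x j| `^ t) `^ (t^-1).

Definition risk (N n : nat) (t : R) (p : 'I_N -> R) (rho : R)
    (psi : sample N n -> bool) : R :=
  Prob p (fun x => psi x) +
  sup [set Prob q (fun x => ~~ psi x) | q in
        [set q : 'I_N -> R | (forall j, 0 <= q j <= 1) /\
                             rho <= lnorm t (fun j => p j - q j)]].

Definition minimax_risk (N n : nat) (t : R) (p : 'I_N -> R) (rho : R) : R :=
  inf [set risk t p rho psi | psi in [set: sample N n -> bool]].

End Binomial.

From HB Require Import structures.
From mathcomp Require Import all_boot all_order all_algebra.
From mathcomp Require Import all_classical all_reals all_analysis.
From mathcomp Require Import ring lra.
Import Order.TTheory GRing.Theory Num.Theory.
Set Implicit Arguments. Unset Strict Implicit. Unset Printing Implicit Defensive.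
Local Open Scope ring_scope.

(* Lower bound for the minimax testing risk by Le Cam's mixture method.
   Given gamma with 0 <= gamma_j <= p_j, every sign vector e in {-1,1}^N
   yields an alternative q_e = p + e*gamma with ||p - q_e||_t = ||gamma||_t,
   hence admissible for every rho <= ||gamma||_t.  Any test psi then has
   risk >= P_p(psi = 1) + M(psi = 0) >= 1 - ||P_p - M||_1, where M is the
   uniform mixture of the P_{q_e}.  The L1 distance is controlled by the
   chi-square divergence, which for this mixture factorizes exactly:
     sum_x M(x)^2 / P_p(x) = prod_j ((1 + d_j)^n + (1 - d_j)^n) / 2,
   with d_j = gamma_j^2 / (p_j (1 - p_j)) <= 2 gamma_j^2 / p_j.
   A cosh-type bound on each factor turns the hypothesis
   sum_j gamma_j^4 / p_j^2 <= L / n^2 into chi^2 <= 16 L, so L = (1-eta)^2/16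
   gives ||P_p - M||_1 <= 1 - eta and R*_rho >= eta. *)

Lemma sum_ffun_bool_prod (R : comNzRingType) (I : finType) (F : I -> bool -> R) :
  \sum_(f : {ffun I -> bool}) \prod_i F i (f i) = \prod_i (F i true + F i false).
Proof. by rewrite -bigA_distr_bigA; apply: eq_bigr => i _; rewrite big_bool. Qed.

Lemma sum2_ffun_bool_prod (R : comNzRingType) (I : finType)
    (F : I -> bool -> bool -> R) :
  \sum_(e : {ffun I -> bool}) \sum_(e' : {ffun I -> bool}) \prod_i F i (e i) (e' i) =
  \prod_i (F i true true + F i true false + (F i false true + F i false false)).
Proof.
rewrite (eq_bigr (fun e : {ffun I -> bool} =>
                   \prod_i (F i (e i) true + F i (e i) false))).
  exact: (@sum_ffun_bool_prod _ _ (fun i a => F i a true + F i a false)).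
by move=> e _; rewrite (@sum_ffun_bool_prod _ _ (fun i b => F i (e i) b)).
Qed.

Lemma sum_sample_prod (R : comNzRingType) (N n : nat)
    (F : 'I_n -> 'I_N -> bool -> R) :
  \sum_(x : sample N n) \prod_l \prod_j F l j (x l j) =
  \prod_l \prod_j (F l j true + F l j false).
Proof.
rewrite -(bigA_distr_bigA (fun l (y : {ffun 'I_N -> bool}) => \prod_j F l j (y j))).
by apply: eq_bigr => l _; rewrite sum_ffun_bool_prod.
Qed.

Section ProductLaw.
Variables (R : realType) (N n : nat).

Lemma pmass_total (q : 'I_N -> R) : \sum_(x : sample N n) pmass q x = 1.
Proof.
rewrite /pmass (@sum_sample_prod _ _ _ (fun l j (b : bool) => if b then q j else 1 - q j)).
by rewrite big1 // => l _; rewrite big1 // => j _; rewrite subrKC.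
Qed.

Lemma pmass_ge0 (q : 'I_N -> R) (x : sample N n) :
  (forall j, 0 <= q j <= 1) -> 0 <= pmass q x.
Proof.
move=> q01; apply: prodr_ge0 => l _; apply: prodr_ge0 => j _.
by have /andP[q0 q1] := q01 j; case: (x l j); rewrite ?subr_ge0.
Qed.

Lemma Prob_le1 (q : 'I_N -> R) (A : pred (sample N n)) :
  (forall j, 0 <= q j <= 1) -> Prob q A <= 1.
Proof.
move=> q01; rewrite /Prob -(pmass_total q) [leRHS](bigID A) /= lerDl.
by apply: sumr_ge0 => x _; apply: pmass_ge0.
Qed.

Lemma pmass_cross_sum (a b c : 'I_N -> R) :
  \sum_(x : sample N n) pmass a x * pmass b x / pmass c x =
  \prod_(l < n) \prod_(j < N)
     (a j * b j / c j + (1 - a j) * (1 - b j) / (1 - c j)).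
Proof.
rewrite -(@sum_sample_prod _ _ _ (fun l j (s : bool) =>
   (if s then a j else 1 - a j) * (if s then b j else 1 - b j) /
   (if s then c j else 1 - c j))).
apply: eq_bigr => x _; rewrite /pmass -prodfV -!big_split /=.
by apply: eq_bigr => l _; rewrite -prodfV -!big_split.
Qed.

End ProductLaw.

Section ChiSquare.
(* A probability P on a finite set and a function Q absolutely continuous
   with respect to it; terms Q x / P x with P x = 0 are 0 on both sides. *)
Variables (R : realType) (T : finType) (P Q : T -> R).
Hypothesis P_ge0 : forall x, 0 <= P x.
Hypothesis P_sum1 : \sum_x P x = 1.
Hypothesis Q_ac : forall x, P x = 0 -> Q x = 0.

Lemma chi2_expand : \sum_x Q x = 1 ->
  \sum_x (P x - Q x) ^+ 2 / P x = \sum_x Q x ^+ 2 / P x - 1.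
Proof.
move=> Q_sum1.
have -> : \sum_x (P x - Q x) ^+ 2 / P x =
          \sum_x (P x - 2 * Q x + Q x ^+ 2 / P x).
  apply: eq_bigr => x _; have [P0|P0] := eqVneq (P x) 0; last by field.
  by rewrite (Q_ac P0) P0 !(invr0, mulr0, subr0, addr0).
by rewrite !big_split /= P_sum1 sumrN -mulr_sumr Q_sum1; lra.
Qed.

Lemma L1_le_chi2 (lam : R) : 0 < lam ->
  \sum_x (P x - Q x) ^+ 2 / P x <= lam ^+ 2 -> \sum_x `|P x - Q x| <= lam.
Proof.
move=> lam0 chi2.
(* pointwise AM-GM: 2|d| <= lam P + d^2 / (lam P) *)
have amgm x : 2 * `|P x - Q x| <= lam * P x + lam^-1 * ((P x - Q x) ^+ 2 / P x).
  have [P0|P0] := eqVneq (P x) 0.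
    by rewrite (Q_ac P0) P0 subrr normr0 !(mulr0, invr0, addr0).
  have a0 : 0 < lam * P x by rewrite mulr_gt0 // lt_def P0 P_ge0.
  set d := P x - Q x; set a := lam * P x.
  have -> : lam^-1 * (d ^+ 2 / P x) = `|d| ^+ 2 / a.
    by rewrite real_normK ?num_real // /a invfM; field; rewrite P0 gt_eqF.
  have : 0 <= (a - `|d|) ^+ 2 / a by rewrite divr_ge0 ?sqr_ge0 ?ltW.
  have -> : (a - `|d|) ^+ 2 / a = a + `|d| ^+ 2 / a - 2 * `|d| by field; rewrite gt_eqF.
  by rewrite subr_ge0.
have : \sum_x 2 * `|P x - Q x| <=
        \sum_x (lam * P x + lam^-1 * ((P x - Q x) ^+ 2 / P x)).
  by apply: ler_sum => x _; exact: amgm.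
rewrite -mulr_sumr big_split /= -!mulr_sumr P_sum1 mulr1.
have : lam^-1 * \sum_x (P x - Q x) ^+ 2 / P x <= lam.
  by rewrite ler_pdivrMl // -expr2.
lra.
Qed.

End ChiSquare.

Lemma prod_1p_le (R : realFieldType) (I : Type) (r : seq I) (a : I -> R) :
  (forall i, 0 <= a i) -> \sum_(i <- r) a i <= 1/2 ->
  \prod_(i <- r) (1 + a i) <= 1 + 2 * \sum_(i <- r) a i.
Proof.
move=> a0; elim: r => [|i r IH]; first by rewrite !big_nil; lra.
rewrite !big_cons => sum_le.
have s0 : 0 <= \sum_(j <- r) a j by rewrite sumr_ge0.
have ai0 := a0 i.
apply: le_trans (_ : (1 + a i) * (1 + 2 * \sum_(j <- r) a j) <= _).
  by rewrite ler_wpM2l ?IH //; lra.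
nra.
Qed.

(* Cosh/sinh-type bounds: if (n d)^2 <= 1/2 then for all k <= n the even part
   ((1+d)^k + (1-d)^k)/2 is at most 1 + 2 (k d)^2; the bound on the odd part
   ((1+d)^k - (1-d)^k)/2 <= 2 k d is the companion invariant of the induction. *)
Lemma pow_even_odd_bound (R : realFieldType) (n : nat) (d : R) :
  0 <= d -> (n%:R * d) ^+ 2 <= 1/2 ->
  forall k, (k <= n)%N ->
    ((1 + d) ^+ k + (1 - d) ^+ k) / 2 <= 1 + 2 * (k%:R * d) ^+ 2 /\
    ((1 + d) ^+ k - (1 - d) ^+ k) / 2 <= 2 * (k%:R * d).
Proof.
move=> d0 nd_le; elim=> [|k IH] lt_kn; first by rewrite !expr0 mul0r; split; lra.
have [IHeven IHodd] := IH (ltnW lt_kn).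
have kd_le : (k%:R * d) ^+ 2 <= 1/2.
  apply: le_trans nd_le; rewrite ler_sqr ?nnegrE ?mulr_ge0 ?ler0n //.
  by rewrite ler_wpM2r // ler_nat ltnW.
set A := (1 + d) ^+ k in IHeven IHodd *; set B := (1 - d) ^+ k in IHeven IHodd *.
set u := k%:R * d in IHeven IHodd kd_le *.
have -> : k.+1%:R * d = u + d by rewrite /u -addn1 natrD mulrDl mul1r.
rewrite !exprS -/A -/B.
have u0 : 0 <= u by rewrite mulr_ge0 ?ler0n.
split; nra.
Qed.

Definition sign (R : pzRingType) (b : bool) : R := if b then 1 else -1.

(* One-coordinate chi-square cross term of two sign perturbations of p:
   E_p[(q_a / p)(q_b / p)] for Bernoulli laws q_s = p + sign(s) g. *)
Lemma sign_cross_coord (R : realFieldType) (p g : R) (a b : bool) :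
  0 <= g <= p -> p <= 1/2 ->
  (p + sign R a * g) * (p + sign R b * g) / p +
  (1 - (p + sign R a * g)) * (1 - (p + sign R b * g)) / (1 - p) =
  1 + sign R a * sign R b * (g ^+ 2 / (p * (1 - p))).
Proof.
move=> /andP[g0 gp] p_le.
have [p0|p0] := eqVneq p 0.
  have g0' : g = 0 by apply/eqP; rewrite eq_le g0 -p0 gp.
  by rewrite p0 g0' !(mulr0, addr0, mul0r, invr0, subr0, divr1, mulr1) add0r.
have q0 : 1 - p != 0 by apply/eqP => h; lra.
by rewrite /sign; case: a; case: b; field; rewrite q0 p0.
Qed.

Section Mixture.
Variables (R : realType) (N n : nat) (p g : 'I_N -> R).
Hypothesis p_range : forall j, 0 <= p j <= 1/2.
Hypothesis g_range : forall j, 0 <= g j <= p j.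

Definition perturb (e : {ffun 'I_N -> bool}) : 'I_N -> R :=
  fun j => p j + sign R (e j) * g j.

Definition mixture (x : sample N n) : R :=
  (2^-1) ^+ N * \sum_(e : {ffun 'I_N -> bool}) pmass (perturb e) x.

Definition delta (j : 'I_N) : R := g j ^+ 2 / (p j * (1 - p j)).

Lemma perturb_range e j : 0 <= perturb e j <= 1.
Proof.
have /andP[g0 gp] := g_range j; have /andP[p0 p_le] := p_range j.
by rewrite /perturb /sign; case: (e j); apply/andP; split; lra.
Qed.

Lemma lnorm_perturb (t : R) e : lnorm t (fun j => p j - perturb e j) = lnorm t g.
Proof.
rewrite /lnorm; congr (_ `^ _); apply: eq_bigr => j _; congr (_ `^ _).
have /andP[g0 _] := g_range j.
rewrite /perturb opprD addNKr normrN normrM (ger0_norm g0).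
by rewrite /sign; case: (e j); rewrite ?normrN normr1 mul1r.
Qed.

(* Where P_p vanishes, so does each P_{q_e}: coordinates with p_j = 0 are
   unperturbed, since then g_j = 0. *)
Lemma perturb_abscont e (x : sample N n) :
  pmass p x = 0 -> pmass (perturb e) x = 0.
Proof.
move=> /eqP /prodf_eq0 [l _] /prodf_eq0 [j _] xj0.
apply/eqP/prodf_eq0; exists l => //; apply/prodf_eq0; exists j => //.
have /andP[g0 gp] := g_range j; have /andP[p0 p_le] := p_range j.
move: xj0; rewrite /perturb /sign; case: (x l j) => /eqP xj0; last lra.
have -> : g j = 0 by lra.
by rewrite mulr0 addr0 xj0.
Qed.

Lemma mixture_Prob (A : pred (sample N n)) :
  \sum_(x | A x) mixture x =
  (2^-1) ^+ N * \sum_(e : {ffun 'I_N -> bool}) Prob (perturb e) A.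
Proof. by rewrite -mulr_sumr exchange_big. Qed.

Lemma sign_average_const (c : R) :
  (2^-1) ^+ N * \sum_(e : {ffun 'I_N -> bool}) c = c.
Proof.
rewrite sumr_const card_ffun card_bool card_ord -[c *+ _]mulr_natr mulrCA natrX.
by rewrite -exprMn mulVf ?pnatr_eq0 // expr1n mulr1.
Qed.

Lemma sign_average_le (a : {ffun 'I_N -> bool} -> R) (B : R) :
  (forall e, a e <= B) -> (2^-1) ^+ N * \sum_e a e <= B.
Proof.
move=> a_le; rewrite -[leRHS]sign_average_const.
by rewrite ler_wpM2l ?exprn_ge0 ?invr_ge0 ?ler0n //; apply: ler_sum.
Qed.

Lemma mixture_total : \sum_(x : sample N n) mixture x = 1.
Proof.
rewrite (mixture_Prob xpredT) -[RHS](sign_average_const 1).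
by congr (_ * _); apply: eq_bigr => e _; exact: pmass_total.
Qed.

Lemma mixture_abscont x : pmass p x = 0 -> mixture x = 0.
Proof. by move=> px0; rewrite /mixture big1 ?mulr0 // => e _; exact: perturb_abscont. Qed.

Lemma perturb_cross_sum e e' :
  \sum_(x : sample N n) pmass (perturb e) x * pmass (perturb e') x / pmass p x =
  \prod_(j < N) (1 + sign R (e j) * sign R (e' j) * delta j) ^+ n.
Proof.
rewrite pmass_cross_sum exchange_big /=; apply: eq_bigr => j _.
rewrite -[n in RHS]card_ord -prodr_const; apply: eq_bigr => l _.
by rewrite sign_cross_coord //; case/andP: (p_range j).
Qed.

Lemma mixture_sq_div (x : sample N n) :
  mixture x ^+ 2 / pmass p x =
  (4^-1) ^+ N * \sum_(e : {ffun 'I_N -> bool}) \sum_(e' : {ffun 'I_N -> bool})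
     pmass (perturb e) x * pmass (perturb e') x / pmass p x.
Proof.
rewrite /mixture expr2 mulrACA -exprMn -mulrA; congr (_ ^+ _ * _); first by field.
rewrite !mulr_suml; apply: eq_bigr => e _.
by rewrite mulr_sumr mulr_suml.
Qed.

Lemma mixture_chi2 :
  \sum_(x : sample N n) mixture x ^+ 2 / pmass p x =
  \prod_(j < N) (((1 + delta j) ^+ n + (1 - delta j) ^+ n) / 2).
Proof.
rewrite (eq_bigr _ (fun x _ => mixture_sq_div x)) -mulr_sumr exchange_big /=.
under eq_bigr do rewrite exchange_big /=.
under eq_bigr do under eq_bigr do rewrite perturb_cross_sum.
rewrite (@sum2_ffun_bool_prod _ _
  (fun j a b => (1 + sign R a * sign R b * delta j) ^+ n)).
rewrite -[N in (_ ^+ N * _)]card_ord -prodr_const -big_split /=.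
apply: eq_bigr => j _; rewrite /sign !(mulr1, mul1r, mulrN1, mulN1r, opprK).
by field.
Qed.

Lemma delta_ge0 j : 0 <= delta j.
Proof.
have /andP[p0 p_le] := p_range j.
by rewrite divr_ge0 ?sqr_ge0 // mulr_ge0 //; lra.
Qed.

(* d_j <= 1 since g_j^2 <= p_j^2 <= p_j (1 - p_j) for p_j <= 1/2. *)
Lemma delta_le1 j : delta j <= 1.
Proof.
have /andP[p0 p_le] := p_range j; have /andP[g0 gp] := g_range j.
have [pj0|pj_gt0] := eqVneq (p j) 0; first by rewrite /delta pj0 mul0r invr0 mulr0.
have pq_gt0 : 0 < p j * (1 - p j) by rewrite mulr_gt0 ?lt_def ?pj_gt0 //; lra.
by rewrite /delta ler_pdivrMr // mul1r; nra.
Qed.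

(* d_j <= 2 g_j^2 / p_j because 1 - p_j >= 1/2, whence the fourth-moment
   bound; coordinates with p_j = 0 have d_j = 0. *)
Lemma delta_sq_le j :
  delta j ^+ 2 <= 4 * (if 0 < p j then g j ^+ 4 / p j ^+ 2 else 0).
Proof.
have /andP[p0 p_le] := p_range j; have /andP[g0 gp] := g_range j.
case: ltP => pj_gt0; last first.
  have pj0 : p j = 0 by lra.
  by rewrite /delta pj0 mul0r invr0 mulr0 expr0n mulr0.
set a := g j ^+ 2 / p j.
have a0 : 0 <= a by rewrite divr_ge0 ?sqr_ge0 ?ltW.
have delta_le : delta j <= 2 * a.
  rewrite /delta invfM mulrA -/a ler_pdivrMr; last lra.
  by nra.
have -> : g j ^+ 4 / p j ^+ 2 = a ^+ 2 by rewrite /a expr_div_n -exprM.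
have := ler_pM (delta_ge0 j) (delta_ge0 j) delta_le delta_le.
by rewrite !expr2; lra.
Qed.

Lemma sum_ndelta_sq_le (L : R) : (0 < n)%N ->
  \sum_(j < N | 0 < p j) g j ^+ 4 / p j ^+ 2 <= L / (n%:R ^+ 2) ->
  \sum_(j < N) (n%:R * delta j) ^+ 2 <= 4 * L.
Proof.
move=> n_gt0 sum_le; have nn_gt0 : 0 < n%:R ^+ 2 :> R by rewrite exprn_gt0 ?ltr0n.
under eq_bigr do rewrite exprMn; rewrite -mulr_sumr.
apply: le_trans (_ : n%:R ^+ 2 * (4 * (L / n%:R ^+ 2)) <= _); last first.
  by rewrite mulrCA [_ * (L / _)]mulrCA mulfV ?gt_eqF // mulr1.
rewrite ler_pM2l //.
apply: le_trans (_ : _ <= 4 * \sum_(j < N | 0 < p j) g j ^+ 4 / p j ^+ 2) _.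
  by rewrite [X in _ <= 4 * X]big_mkcond mulr_sumr; apply: ler_sum => j _; exact: delta_sq_le.
by rewrite ler_wpM2l.
Qed.

Lemma mixture_chi2_le (L : R) : (0 < n)%N -> 0 <= L <= 1/16 ->
  \sum_(j < N | 0 < p j) g j ^+ 4 / p j ^+ 2 <= L / (n%:R ^+ 2) ->
  \sum_(x : sample N n) mixture x ^+ 2 / pmass p x <= 1 + 16 * L.
Proof.
move=> n_gt0 /andP[L0 L_le] sum_le; rewrite mixture_chi2.
have sum_nd := sum_ndelta_sq_le n_gt0 sum_le.
have nd_le j : (n%:R * delta j) ^+ 2 <= 1/2.
  apply: le_trans (_ : 4 * L <= _); last lra.
  apply: le_trans sum_nd; rewrite (bigD1 j) //= lerDl.
  by apply: sumr_ge0 => *; exact: sqr_ge0.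
have factor_le j : 0 <= ((1 + delta j) ^+ n + (1 - delta j) ^+ n) / 2
                   <= 1 + 2 * (n%:R * delta j) ^+ 2.
  have d0 := delta_ge0 j; have d1 := delta_le1 j; apply/andP; split.
    by rewrite divr_ge0 // addr_ge0 // exprn_ge0 //; lra.
  exact: (pow_even_odd_bound d0 (nd_le j) (leqnn n)).1.
apply: le_trans (_ : \prod_(j < N) (1 + 2 * (n%:R * delta j) ^+ 2) <= _).
  exact: ler_prod.
apply: le_trans; first apply: prod_1p_le.
- by move=> j; rewrite mulr_ge0 ?sqr_ge0.
- by rewrite -mulr_sumr; lra.
- by rewrite -mulr_sumr; lra.
Qed.

Local Open Scope classical_set_scope.

(* Le Cam's bound: every test has risk at least 1 - ||P_p - M||_1, because
   its type II error is at least its average over the alternatives q_e. *)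
Lemma risk_ge_L1 (t rho : R) (psi : sample N n -> bool) :
  rho <= lnorm t g ->
  1 - \sum_(x : sample N n) `|pmass p x - mixture x| <= risk t p rho psi.
Proof.
move=> rho_le.
set S := [set Prob q (fun x => ~~ psi x) | q in
           [set q : 'I_N -> R | (forall j, 0 <= q j <= 1) /\
                                rho <= lnorm t (fun j => p j - q j)]].
have S_ub : has_ubound S by exists 1 => _ [q [q01 _] <-]; exact: Prob_le1.
have mix_le : \sum_(x | ~~ psi x) mixture x <= sup S.
  rewrite mixture_Prob; apply: sign_average_le => e; apply: (ub_le_sup S_ub).
  exists (perturb e); last by [].
  by split; [exact: perturb_range | rewrite lnorm_perturb].
have tot := pmass_total n p; rewrite (bigID psi) /= in tot.
have L1_ge : \sum_(x | ~~ psi x) (pmass p x - mixture x) <=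
             \sum_(x : sample N n) `|pmass p x - mixture x|.
  apply: le_trans (_ : \sum_(x | ~~ psi x) `|pmass p x - mixture x| <= _).
    by apply: ler_sum => x _; exact: ler_norm.
  by rewrite [leRHS](bigID psi) /= lerDr; apply: sumr_ge0 => *.
rewrite /risk -/S /Prob; move: L1_ge; rewrite sumrB; lra.
Qed.

Local Close Scope classical_set_scope.

End Mixture.

Theorem lemmaA2 (R : realType) (eta : R) (heta : 0 < eta < 1) :
  exists L : R, 0 < L /\
  forall (N n : nat) (t : R) (p gamma : 'I_N -> R) (rho : R),
    (2 <= N)%N -> (2 <= n)%N -> ~~ odd n ->
    1 <= t <= 2 ->
    (forall j, 0 <= p j <= 1 / 2) ->
    (forall i, 0 <= gamma i <= p i) ->
    \sum_(i < N | 0 < p i) gamma i ^+ 4 / p i ^+ 2 <= L / (n%:R ^+ 2) ->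
    rho <= lnorm t gamma ->
    eta <= minimax_risk n t p rho.
Proof.
have /andP[eta_gt0 eta_lt1] := heta.
exists ((1 - eta) ^+ 2 / 16); split; first by rewrite divr_gt0 ?exprn_gt0 ?subr_gt0.
move=> N n t p g rho _ n_ge2 _ _ p_range g_range sum_le rho_le.
have L_range : 0 <= (1 - eta) ^+ 2 / 16 <= 1/16.
  by apply/andP; split; [rewrite divr_ge0 ?sqr_ge0 | rewrite ler_pM2r //]; nra.
(* chi^2(M, P_p) <= 16 L = (1 - eta)^2, hence ||P_p - M||_1 <= 1 - eta *)
have chi2_le : \sum_(x : sample N n) (pmass p x - mixture p g x) ^+ 2 / pmass p x
               <= (1 - eta) ^+ 2.
  rewrite chi2_expand; last exact: mixture_total.
  - have := mixture_chi2_le p_range g_range (ltnW n_ge2) L_range sum_le; lra.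
  - exact: pmass_total.
  - exact: mixture_abscont.
have eta_gap : 0 < 1 - eta by rewrite subr_gt0.
have p01 j : 0 <= p j <= 1 by have /andP[? ?] := p_range j; apply/andP; split; lra.
have L1_le := L1_le_chi2 (fun x => pmass_ge0 x p01) (pmass_total n p)
                (mixture_abscont p_range g_range) eta_gap chi2_le.
rewrite /minimax_risk; apply: lb_le_inf.
  by exists (risk t p rho (fun _ : sample N n => true)), (fun _ => true).
by move=> _ [psi _ <-]; have := risk_ge_L1 p_range g_range psi rho_le; lra.
Qed.
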